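(* Let $(G,\sigma)$, $(G',\sigma')$, $(H,\pi)$, $(H',\pi')$ be signed graphs such that $(G,\sigma)$ admits a homomorphism to $(G',\sigma')$ and $(H,\pi)$ admits a homomorphism to $(H',\pi')$. Then $(G,\sigma)\,\square\,(H,\pi)$ admits a homomorphism to $(G',\sigma')\,\square\,(H',\pi')$.
   Context: A signed graph $(G,\sigma)$ is a simple loopless undirected graph $G$ with a signature $\sigma:E(G)\to\{+1,-1\}$. Switching a vertex $v$ negates the sign of every edge incident to $v$; two signatures of $G$ are equivalent if one is obtained from the other by switching a set of vertices. A homomorphism of $(G,\sigma)$ to $(H,\pi)$ is a graph homomorphism $\varphi:G\to H$ for which there is a signature $\sigma'$ equivalent to $\sigma$ with $\pi(\varphi(u)\varphi(v))=\sigma'(uv)$ for every edge $uv$ of $G$. The Cartesian product $(G,\sigma)\,\square\,(H,\pi)$ is the signed graph with vertex set $V(G)\times V(H)$ in which $(u_1,v_1)(u_2,v_2)$ is an edge of sign $s$ if and only if either $u_1=u_2$ and $v_1v_2$ is an edge of $H$ with $\pi(v_1v_2)=s$, or $v_1=v_2$ and $u_1u_2$ is an edge of $G$ with $\sigma(u_1u_2)=s$. *)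

From mathcomp Require Import all_boot.
Set Implicit Arguments. Unset Strict Implicit. Unset Printing Implicit Defensive.

(* The signature is encoded as a
   symmetric boolean function on pairs of vertices: [sg u v = true] means the
   edge uv has sign -1, [false] means +1.  Values on non-edges are irrelevant. *)
Record sgraph := SGraph {
  svert : finType;
  sadj : rel svert;
  sadj_sym : symmetric sadj;
  sadj_irr : irreflexive sadj;
  ssign : svert -> svert -> bool;
  ssign_sym : forall u v, ssign u v = ssign v u }.

Definition switched (G : sgraph) (X : {set svert G}) (u v : svert G) : bool :=
  ssign u v (+) (u \in X) (+) (v \in X).

Definition sg_hom (G H : sgraph) (phi : svert G -> svert H) : Prop :=
  exists X : {set svert G}, forall u v, sadj u v ->
    sadj (phi u) (phi v) /\ ssign (phi u) (phi v) = switched X u v.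

Definition sg_hom_exists (G H : sgraph) : Prop :=
  exists phi : svert G -> svert H, sg_hom phi.

Section Prod.
Variables G H : sgraph.
Definition prod_adj : rel (svert G * svert H) := fun x y =>
  ((x.1 == y.1) && sadj x.2 y.2) || ((x.2 == y.2) && sadj x.1 y.1).
Definition prod_sign (x y : svert G * svert H) : bool :=
  if x.1 == y.1 then ssign x.2 y.2 else ssign x.1 y.1.

Lemma prod_adj_sym : symmetric prod_adj.
Proof. by move=> x y; rewrite /prod_adj (eq_sym x.1) (eq_sym x.2) sadj_sym (sadj_sym x.1). Qed.
Lemma prod_adj_irr : irreflexive prod_adj.
Proof. by move=> x; rewrite /prod_adj !eqxx !sadj_irr. Qed.
Lemma prod_sign_sym x y : prod_sign x y = prod_sign y x.
Proof. by rewrite /prod_sign eq_sym; case: eqP => _; rewrite ssign_sym. Qed.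

Definition sg_prod : sgraph :=
  @SGraph (svert G * svert H)%type prod_adj prod_adj_sym prod_adj_irr
          prod_sign prod_sign_sym.
End Prod.

From mathcomp Require Import all_boot.

(* Take the product map (u, v) |-> (f u, g v) and switch the vertices (u, v)
   with [u \in X] xor [v \in Y], where X and Y are the switching sets of f and
   g.  On an edge of the product one coordinate is constant, so its
   contribution to the switching cancels and only the switching of the moving
   coordinate remains, which is exactly what f or g requires. *)

Set Implicit Arguments.
Unset Strict Implicit.
Unset Printing Implicit Defensive.

Lemma sadj_neq (G : sgraph) (u v : svert G) : sadj u v -> u != v.
Proof. by apply: contraTneq => ->; rewrite sadj_irr. Qed.

Section ProductHomomorphism.

Variables G G' H H' : sgraph.

Definition prod_map (f : svert G -> svert G') (g : svert H -> svert H')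
    (x : svert (sg_prod G H)) : svert (sg_prod G' H') :=
  (f x.1, g x.2).

Definition prod_switching (X : {set svert G}) (Y : {set svert H}) :
    {set svert (sg_prod G H)} :=
  [set x | (x.1 \in X) (+) (x.2 \in Y)].

Lemma switched_prod_fixl (X : {set svert G}) (Y : {set svert H})
    (u : svert G) (v w : svert H) :
  switched (prod_switching X Y) (u, v) (u, w) = switched Y v w.
Proof.
rewrite /switched /= /prod_sign /= eqxx !inE /=.
by case: (u \in X); case: (v \in Y); case: (w \in Y); case: ssign.
Qed.

Lemma switched_prod_fixr (X : {set svert G}) (Y : {set svert H})
    (u w : svert G) (v : svert H) : u != w ->
  switched (prod_switching X Y) (u, v) (w, v) = switched X u w.
Proof.
move=> /negbTE neq_uw; rewrite /switched /= /prod_sign /= neq_uw !inE /=.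
by case: (u \in X); case: (w \in X); case: (v \in Y); case: ssign.
Qed.

Lemma prod_sg_hom (f : svert G -> svert G') (g : svert H -> svert H') :
  sg_hom f -> sg_hom g -> sg_hom (prod_map f g).
Proof.
move=> [X hom_f] [Y hom_g]; exists (prod_switching X Y).
move=> [u v] [w z]; rewrite /= /prod_adj /prod_sign /=.
case/orP=> /andP[/eqP <- adj].
- have [adj' sign'] := hom_g _ _ adj.
  by rewrite eqxx adj' sign' switched_prod_fixl.
- have [adj' sign'] := hom_f _ _ adj.
  rewrite eqxx (negbTE (sadj_neq adj')) adj' orbT sign'.
  by rewrite switched_prod_fixr ?sadj_neq.
Qed.

End ProductHomomorphism.

Theorem theorem4p2 (G G' H H' : sgraph) :
  sg_hom_exists G G' -> sg_hom_exists H H' ->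
  sg_hom_exists (sg_prod G H) (sg_prod G' H').
Proof.
move=> [f hom_f] [g hom_g].
by exists (prod_map f g); apply: prod_sg_hom.
Qed.
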